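(* Let $T$ be a nonempty Hausdorff compact topological space, $\Omega$ a nonempty open subset of $\mathbb{R}^p$, and $h:\mathbb{R}^p\times T\to\mathbb{R}$, $f:\mathbb{R}^p\to\mathbb{R}$ functions. Assume that $\hat{x}\in\Omega$ is an optimal solution of the problem of maximizing $f(x)$ subject to $x\in\Omega$ and $h(x,t)\ge0$ for all $t\in T$, and that: (a) $T(\hat{x}):=\{t\in T:h(\hat{x},t)=0\}\neq\emptyset$; (b) $f$ is Gateaux differentiable at $\hat{x}$ and the family $(h(\cdot,t))_{t\in T}$ is equi-Gateaux differentiable at $\hat{x}$; (c) the family $(h(\cdot,t))_{t\in T\setminus T(\hat{x})}$ is equi-lower semicontinuous at $\hat{x}$; (d) the maps $t\mapsto h(\hat{x},t)$ and $t\mapsto\nabla_x h(\hat{x},t)$ are continuous. Then there exist $\lambda_i\ge0$ and $t_i\in T(\hat{x})$, $i=0,\dots,k$, with $k\le p$ and $\sum_{i=0}^k\lambda_i=1$, such that $$\lambda_0 d_G f(\hat{x})+\sum_{i=1}^k\lambda_i\nabla_x h(\hat{x},t_i)=0.$$ If moreover $0\notin\operatorname{conv}\{\nabla_x h(\hat{x},t):t\in T(\hat{x})\}$, then $\lambda_0\neq0$.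
   Context: $\nabla_x h(\hat x,t)$ denotes the Gateaux differential of $h(\cdot,t)$ at $\hat x$. A function $\phi$ is Gateaux differentiable at $x$ if there is a linear functional $d_G\phi(x)$ with $\lim_{t\searrow0}(\phi(x+tv)-\phi(x))/t=\langle d_G\phi(x),v\rangle$ for all $v$. A family $C$ of functions is equi-Gateaux differentiable at $x$ if each member is Gateaux differentiable at $x$ and for every $v$, $\lim_{s\searrow0}\sup_{\phi\in C}|(\phi(x+sv)-\phi(x)-s\langle d_G\phi(x),v\rangle)/s|=0$; it is equi-lower semicontinuous at $x$ if for every $\varepsilon>0$ there is an open neighbourhood $O$ of $x$ with $\phi(y)-\phi(x)>-\varepsilon$ for all $y\in O$ and all $\phi$ in the family. *)

From HB Require Import structures.
From mathcomp Require Import all_boot all_order all_algebra.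
From mathcomp Require Import all_classical all_reals all_analysis.
Set Implicit Arguments. Unset Strict Implicit. Unset Printing Implicit Defensive.
Import Order.TTheory GRing.Theory Num.Theory.
Import numFieldNormedType.Exports.
Local Open Scope classical_set_scope.
Local Open Scope ring_scope.

(* R^p is represented by row vectors 'rV[R]_p; linear functionals on R^p are
   identified with vectors through the standard pairing dotv. *)
Definition dotv (R : realType) (p : nat) (d v : 'rV[R]_p) : R :=
  \sum_(i < p) d ord0 i * v ord0 i.

Definition gateaux_diff (R : realType) (p : nat) (phi : 'rV[R]_p -> R)
  (x d : 'rV[R]_p) : Prop :=
  forall v : 'rV[R]_p,
    (fun s : R => (phi (x + s *: v) - phi x) / s) @ 0^'+ --> dotv d v.

Definition equi_gateaux (R : realType) (p : nat) (T : Type)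
  (phi : T -> 'rV[R]_p -> R) (x : 'rV[R]_p) (dphi : T -> 'rV[R]_p) : Prop :=
  (forall t, gateaux_diff (phi t) x (dphi t)) /\
  forall v : 'rV[R]_p, forall eps : R, 0 < eps ->
    exists2 delta : R, 0 < delta &
      forall s : R, 0 < s < delta -> forall t : T,
        `|(phi t (x + s *: v) - phi t x - s * dotv (dphi t) v) / s| <= eps.

Definition equi_lsc (R : realType) (p : nat) (T : Type) (A : set T)
  (phi : T -> 'rV[R]_p -> R) (x : 'rV[R]_p) : Prop :=
  forall eps : R, 0 < eps ->
    exists O : set 'rV[R]_p, [/\ open O, O x &
      forall y, O y -> forall t, A t -> phi t y - phi t x > - eps].

Definition in_conv (R : realType) (p : nat) (S : set 'rV[R]_p) (z : 'rV[R]_p)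
  : Prop :=
  exists n : nat, exists mu : 'I_n -> R, exists y : 'I_n -> 'rV[R]_p,
    [/\ forall i, 0 <= mu i, \sum_(i < n) mu i = 1, forall i, S (y i)
      & z = \sum_(i < n) mu i *: y i].

(* At the optimum no direction v can satisfy <d_G f(xh), v> > 0 and
   <grad_x h(xh, t), v> > 0 for every active index t: for small s > 0 the point
   xh + s v would still be feasible (uniformly near the compact active set by
   equi-Gateaux differentiability, and away from it by equi-lower
   semicontinuity) while f would increase.  The multipliers then come from a
   Gordan-type alternative: among the convex combinations of d_G f(xh) with p
   active gradients, a compact set, take a point z of least Euclidean norm.  By
   Caratheodory's theorem the segment from z towards any further gradient stays
   in that set, so if z <> 0 then v := z is a direction as above; hence z = 0. *)

From HB Require Import structures.
From mathcomp Require Import all_boot all_order all_algebra.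
From mathcomp Require Import all_classical all_reals all_analysis.
From mathcomp Require Import ring lra.
Set Implicit Arguments. Unset Strict Implicit. Unset Printing Implicit Defensive.
Import Order.TTheory GRing.Theory Num.Theory.
Import numFieldNormedType.Exports.
Local Open Scope classical_set_scope.
Local Open Scope ring_scope.

Section AnchoredHull.
Variable R : realType.
Import ArrowAsProduct.

Lemma affine_dependence n (y : 'I_n.+2 -> 'rV[R]_n) :
  exists d : 'I_n.+2 -> R,
    [/\ exists i, d i != 0, \sum_i d i *: y i = 0 & \sum_i d i = 0].
Proof.
pose M := row_mx (const_mx 1 : 'M[R]_(n.+2, 1)) (\matrix_(i, k) y i ord0 k).
have [r r0 rM0] : exists2 r : 'rV_n.+2, r != 0 & r *m M = 0.
  have kerM_neq0 : kermx M != 0.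
    rewrite -mxrank_eq0 mxrank_ker subn_eq0 -ltnNge.
    exact: leq_ltn_trans (rank_leq_col M) _.
  have [i kerMi|kerM0] := pickP (fun i => row i (kermx M) != 0).
    by exists (row i (kermx M)) => //; rewrite -row_mul mulmx_ker row0.
  case/eqP: kerM_neq0; apply/row_matrixP => i; rewrite row0; apply/eqP.
  exact/negbFE/kerM0.
move/eqP: rM0; rewrite mul_mx_row row_mx_eq0 => /andP[/eqP r1 /eqP ry].
exists (r ord0); split.
- by apply/existsP; apply: contraNT r0 => /existsPn-rj0; apply/eqP/rowP => j;
    rewrite mxE; exact/eqP/negbNE.
- apply/rowP => k; move/rowP/(_ k): ry; rewrite !mxE summxE; apply: etrans.
  by apply: eq_bigr => j _; rewrite !mxE.
- move/rowP/(_ ord0): r1; rewrite !mxE; apply: etrans.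
  by apply: eq_bigr => j _; rewrite !mxE mulr1.
Qed.

Lemma caratheodory_zero_weight n (c : 'I_n.+2 -> R) (y : 'I_n.+2 -> 'rV[R]_n) :
  (forall i, 0 <= c i) -> \sum_i c i = 1 ->
  exists k : 'I_n.+2, exists c' : 'I_n.+2 -> R,
    [/\ k != ord0, c' k = 0, forall i, 0 <= c' i, \sum_i c' i = 1
      & \sum_i c' i *: y i = \sum_i c i *: y i].
Proof.
move=> c_ge0 c_sum1.
have [d [d_neq0 dy0 d_sum0 d0_le0]] : exists d : 'I_n.+2 -> R,
    [/\ exists i, d i != 0, \sum_i d i *: y i = 0, \sum_i d i = 0 & d ord0 <= 0].
  have [d [d_neq0 dy0 d_sum0]] := affine_dependence y.
  have [d0_le0|d0_gt0] := lerP (d ord0) 0; first by exists d.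
  exists (fun i => - d i); split.
  - by have [i ?] := d_neq0; exists i; rewrite oppr_eq0.
  - by under eq_bigr do rewrite scaleNr; rewrite sumrN dy0 oppr0.
  - by rewrite sumrN d_sum0 oppr0.
  - by rewrite oppr_le0 ltW.
(* As d ord0 <= 0, the anchor's weight only grows along c - s d, so the
   vanishing weight can be looked for among the other indices. *)
pose P j := (j != ord0) && (0 < d j).
have [j0 Pj0] : exists j, P j.
  apply/existsP; apply: contraT; rewrite negb_exists => /forallP notP.
  have d_le0 i : d i <= 0.
    by have := notP i; rewrite /P; case: eqP => [->|_ /=]; rewrite // -leNgt.
  have [i /eqP[]] := d_neq0; apply/eqP; rewrite -oppr_eq0; apply/eqP.
  apply: (@psumr_eq0P _ _ xpredT (fun i => - d i)) => // [j _|].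
    by rewrite oppr_ge0.
  by rewrite sumrN d_sum0 oppr0.
case: (arg_minP (fun j => c j / d j) Pj0) => k /andP[k_neq0 dk_gt0] k_min.
pose s := c k / d k.
have s_ge0 : 0 <= s by rewrite divr_ge0 // ltW.
exists k, (fun i => c i - s * d i); split => //.
- by rewrite /s divfK ?subrr // gt_eqF.
- move=> i; rewrite subr_ge0; have [Pi|notPi] := boolP (P i).
    by case/andP: (Pi) => _ di_gt0; rewrite -ler_pdivlMr //; exact: k_min.
  have di_le0 : d i <= 0.
    by move: notPi; rewrite /P; case: eqP => [->|_ /=]; rewrite // -leNgt.
  exact: le_trans (mulr_ge0_le0 s_ge0 di_le0) (c_ge0 i).
- by rewrite sumrB -mulr_sumr d_sum0 mulr0 subr0.
- under eq_bigr do rewrite scalerBl -scalerA.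
  by rewrite sumrB -scaler_sumr dy0 scaler0 subr0.
Qed.

(* The anchor y0 sits at index 0, apart from the n points of K, so that its
   weight stays distinguished through Caratheodory reductions. *)
Definition anchored_hull p n (y0 : 'rV[R]_p) (K : set 'rV[R]_p) : set 'rV[R]_p :=
  [set z | exists lam : 'I_n.+1 -> R, exists y : 'I_n.+1 -> 'rV[R]_p,
    [/\ forall i, 0 <= lam i, \sum_i lam i = 1, y ord0 = y0,
        forall i, i != ord0 -> K (y i) & z = \sum_i lam i *: y i]].

Lemma lift_neq0 n (k : 'I_n.+2) (i : 'I_n.+1) : i != ord0 -> lift k i != ord0.
Proof.
apply: contraNneq => /(congr1 val) /=; rewrite /bump.
by case: i => [[|i] ?] //=; rewrite addnS.
Qed.

Lemma anchored_hull_caratheodory n (y0 : 'rV[R]_n) K :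
  anchored_hull n.+1 y0 K `<=` anchored_hull n y0 K.
Proof.
move=> _ [lam [y [lam_ge0 lam_sum1 y_0 yK ->]]].
have [k [c [k_neq0 ck0 c_ge0 c_sum1 cy]]] :=
  caratheodory_zero_weight y lam_ge0 lam_sum1.
exists (c \o lift k), (y \o lift k); split => //=.
- by move: c_sum1; rewrite (bigD1_ord k) //= ck0 add0r.
- by rewrite -y_0; congr y; apply/val_inj; case: (k) k_neq0 => [[|m] ?].
- by move=> i /(lift_neq0 k); exact: yK.
- by rewrite -cy (bigD1_ord k) //= ck0 scale0r add0r.
Qed.

Lemma anchored_hull_to_anchor p n (y0 : 'rV[R]_p) K z s :
  anchored_hull n y0 K z -> 0 <= s <= 1 ->
  anchored_hull n y0 K ((1 - s) *: z + s *: y0).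
Proof.
move=> [lam [y [lam_ge0 lam_sum1 y_0 yK ->]]] /andP[s_ge0 s_le1].
exists (fun i => (1 - s) * lam i + (if i == ord0 then s else 0)), y; split => //.
- by move=> i; rewrite addr_ge0 ?mulr_ge0 ?subr_ge0 //; case: ifP.
- by rewrite big_split /= -mulr_sumr lam_sum1 -big_mkcond big_pred1_eq; lra.
- under [in RHS]eq_bigr do rewrite scalerDl -scalerA.
  rewrite big_split /= -scaler_sumr; congr (_ + _).
  rewrite (bigD1 ord0) //= y_0 big1 ?addr0 // => i /negbTE ->.
  exact: scale0r.
Qed.

Lemma anchored_hull_cons p n (y0 : 'rV[R]_p) K z w s :
  anchored_hull n y0 K z -> K w -> 0 <= s <= 1 ->
  anchored_hull n.+1 y0 K ((1 - s) *: z + s *: w).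
Proof.
move=> [lam [y [lam_ge0 lam_sum1 y_0 yK ->]]] Kw /andP[s_ge0 s_le1].
pose lam' i := if unlift ord_max i is Some j then (1 - s) * lam j else s.
pose y' i := if unlift ord_max i is Some j then y j else w.
have lam'_lift j : lam' (lift ord_max j) = (1 - s) * lam j by rewrite /lam' liftK.
have y'_lift j : y' (lift ord_max j) = y j by rewrite /y' liftK.
have lam'_max : lam' ord_max = s by rewrite /lam' unlift_none.
have y'_max : y' ord_max = w by rewrite /y' unlift_none.
have widen_lift (i : 'I_n.+1) : widen_ord (leqnSn _) i = lift ord_max i.
  by apply/val_inj; rewrite /= /bump leqNgt ltn_ord.
exists lam', y'; split.
- by move=> i; rewrite /lam'; case: unliftP => *; rewrite ?mulr_ge0 ?subr_ge0.
- rewrite big_ord_recr /= lam'_max.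
  under eq_bigr do rewrite widen_lift lam'_lift.
  by rewrite -mulr_sumr lam_sum1 mulr1 subrK.
- by rewrite -y_0 -y'_lift; congr y'; apply/val_inj.
- move=> i; case: (unliftP ord_max i) => [j ->|->]; last by rewrite y'_max.
  rewrite y'_lift => j_neq0; apply: yK; apply: contraNneq j_neq0 => ->.
  exact/eqP/val_inj.
- rewrite [RHS]big_ord_recr /= lam'_max y'_max.
  under [in RHS]eq_bigr do rewrite widen_lift lam'_lift y'_lift -scalerA.
  by rewrite -scaler_sumr.
Qed.

Lemma anchored_hull_segment n (y0 : 'rV[R]_n) K z w s :
  anchored_hull n y0 K z -> w = y0 \/ K w -> 0 <= s <= 1 ->
  anchored_hull n y0 K ((1 - s) *: z + s *: w).
Proof.
move=> hull_z [->|Kw] s01; first exact: anchored_hull_to_anchor.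
by apply: anchored_hull_caratheodory; exact: anchored_hull_cons.
Qed.

Lemma compact_anchored_hull p n (y0 : 'rV[R]_p) K :
  compact K -> compact (anchored_hull n y0 K).
Proof.
move=> cK.
pose B (i : 'I_n.+1) : set (R * 'rV[R]_p) :=
  `[0, 1] `*` (if i == ord0 then [set y0] else K).
pose S := [set x : 'I_n.+1 -> R * 'rV[R]_p | forall i, B i (x i)].
pose comb (x : 'I_n.+1 -> R * 'rV[R]_p) := \sum_i (x i).1 *: (x i).2.
have fst_proj_cont i : continuous (fun x : 'I_n.+1 -> R * 'rV[R]_p => (x i).1).
  move=> x; apply: (continuous_comp (@proj_continuous _ _ i x)).
  by case: (x i) => a b; exact: cvg_fst.
have snd_proj_cont i : continuous (fun x : 'I_n.+1 -> R * 'rV[R]_p => (x i).2).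
  move=> x; apply: (continuous_comp (@proj_continuous _ _ i x)).
  by case: (x i) => a b; exact: cvg_snd.
have -> : anchored_hull n y0 K = comb @` (S `&` [set x | \sum_i (x i).1 = 1]).
  apply/seteqP; split.
  - move=> _ [lam [y [lam_ge0 lam_sum1 y_0 yK ->]]].
    exists (fun i => (lam i, y i)) => //; split => //= i; split => /=.
      by rewrite in_itv /= lam_ge0 /= -lam_sum1 (bigD1 i) //= lerDl sumr_ge0.
    by case: eqP => [->|/eqP]; [|exact: yK].
  - move=> _ [x [xB x_sum1] <-].
    exists (fun i => (x i).1), (fun i => (x i).2); split => //.
    + by move=> i; case: (xB i); rewrite /= in_itv /= => /andP[].
    + by case: (xB ord0).
    + by move=> i i0; case: (xB i); rewrite (negbTE i0).
apply: continuous_compact.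
  apply: continuous_subspaceT; apply: continuous_big; first exact: add_continuous.
  by move=> i _ x; exact: cvgZ (fst_proj_cont i x) (snd_proj_cont i x).
apply: compact_closedI.
  apply: tychonoff => i; apply: compact_setX; first exact: segment_compact.
  by case: eqP => _; [exact: compact_set1|].
apply: (preimage_closed _ (@closed_eq _ 1)) => x _.
apply: continuous_big; first exact: add_continuous.
by move=> i _; exact: fst_proj_cont.
Qed.

Lemma dotv_ge0 p (z : 'rV[R]_p) : 0 <= dotv z z.
Proof. by rewrite /dotv sumr_ge0 // => i _; rewrite -expr2 sqr_ge0. Qed.

Lemma dotv_gt0 p (z : 'rV[R]_p) : (0 < dotv z z) = (z != 0).
Proof.
rewrite lt_def dotv_ge0 andbT; congr negb; apply/eqP/eqP => [|->]; last first.
  by rewrite /dotv big1 // => i _; rewrite mxE mulr0.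
move=> /eqP; rewrite /dotv psumr_eq0 => [/allP z0|i _]; last first.
  by rewrite -expr2 sqr_ge0.
apply/rowP => i; rewrite mxE; apply/eqP.
by have := z0 i (mem_index_enum i); rewrite mulf_eq0 orbb.
Qed.

Lemma dotv_segment p (z w : 'rV[R]_p) s :
  dotv ((1 - s) *: z + s *: w) ((1 - s) *: z + s *: w) =
  dotv z z + 2 * s * (dotv w z - dotv z z) + s ^+ 2 * dotv (w - z) (w - z).
Proof.
rewrite /dotv -sumrB !mulr_sumr -!big_split /=.
by apply: eq_bigr => i _; rewrite !mxE; ring.
Qed.

Lemma linear_coef_ge0 (a b : R) : 0 <= b ->
  (forall s, 0 < s < 1 -> 0 <= 2 * s * a + s ^+ 2 * b) -> 0 <= a.
Proof.
move=> b_ge0 quad_ge0; rewrite leNgt; apply/negP => a_lt0.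
pose s := - a / (b - a + 1).
have s_def : s * (b - a + 1) = - a by rewrite divfK // gt_eqF //; lra.
have s_gt0 : 0 < s by rewrite divr_gt0 //; lra.
have s_lt1 : s < 1 by rewrite ltr_pdivrMr; lra.
(* With this s, 2 a + s b = a - s (1 - a) < 0. *)
have := quad_ge0 s; rewrite s_gt0 s_lt1 => /(_ isT).
nra.
Qed.

Lemma min_dotv_le p (C : set 'rV[R]_p) z w :
  (forall x, C x -> dotv z z <= dotv x x) ->
  (forall s, 0 < s < 1 -> C ((1 - s) *: z + s *: w)) -> dotv z z <= dotv w z.
Proof.
move=> z_min C_seg; rewrite -subr_ge0.
apply: (linear_coef_ge0 (dotv_ge0 (w - z))) => s s01.
by have := z_min _ (C_seg s s01); rewrite dotv_segment; lra.
Qed.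

Lemma continuous_dotv_diag p : continuous (fun z : 'rV[R]_p => dotv z z).
Proof.
apply: continuous_big; first exact: add_continuous.
move=> i _ z.
exact: cvgM (@coord_continuous _ _ _ ord0 i z) (@coord_continuous _ _ _ ord0 i z).
Qed.

Lemma anchored_hull0_or_separated p (y0 : 'rV[R]_p) K : compact K -> K !=set0 ->
  anchored_hull p y0 K 0 \/
  exists v, 0 < dotv y0 v /\ forall k, K k -> 0 < dotv k v.
Proof.
move=> cK [k0 Kk0].
have hull_y0 : anchored_hull p y0 K y0.
  exists (fun i => if i == ord0 then 1 else 0).
  exists (fun i => if i == ord0 then y0 else k0); split=> //.
  - by move=> i; case: ifP.
  - by rewrite (bigD1 ord0) //= big1 ?addr0 // => i /negbTE ->.
  - by move=> i /negbTE ->.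
  - rewrite (bigD1 ord0) //= big1 ?addr0 ?scale1r // => i /negbTE ->.
    exact: scale0r.
have [z /[!inE] hull_z z_min] := compact_EVT_min (ex_intro _ _ hull_y0)
  (compact_anchored_hull (n := p) (y0 := y0) cK)
  (continuous_subspaceT (@continuous_dotv_diag p)).
have [z0|z_neq0] := eqVneq z 0; [by left; rewrite -z0 | right; exists z].
have zz_le w : w = y0 \/ K w -> dotv z z <= dotv w z.
  move=> w_y0K; apply: (min_dotv_le (C := anchored_hull p y0 K)).
    by move=> x hull_x; apply: z_min; rewrite inE.
  move=> s /andP[s_gt0 s_lt1].
  by apply: anchored_hull_segment => //; rewrite !ltW.
have zz_gt0 : 0 < dotv z z by rewrite dotv_gt0.
split=> [|k Kk]; apply: lt_le_trans zz_gt0 (zz_le _ _); by [left | right].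
Qed.

Lemma anchored_hull0_image p (y0 : 'rV[R]_p) (T : Type) (g : T -> 'rV[R]_p)
    (Z : set T) :
  Z !=set0 -> anchored_hull p y0 (g @` Z) 0 ->
  exists lam : 'I_p.+1 -> R, exists ts : 'I_p.+1 -> T,
    [/\ forall i, 0 <= lam i, forall i, Z (ts i), \sum_i lam i = 1
      & lam ord0 *: y0 + \sum_(i < p) lam (lift ord0 i) *: g (ts (lift ord0 i)) = 0].
Proof.
move=> [t0 Zt0] [lam [y [lam_ge0 lam_sum1 y_0 yZ y_comb]]].
have /fin_all_exists[ts tsP] :
    forall i : 'I_p.+1, exists t, Z t /\ (i != ord0 -> g t = y i).
  move=> i; have [->|i_neq0] := eqVneq i ord0; first by exists t0.
  by have [t Zt gt] := yZ i i_neq0; exists t.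
exists lam, ts; split => // [i|]; first by case: (tsP i).
rewrite [RHS]y_comb big_ord_recl y_0; congr (_ + _); apply: eq_bigr => i _.
by case: (tsP (lift ord0 i)) => _ ->.
Qed.

End AnchoredHull.

Section FirstOrderOptimality.
Variables (R : realType) (p : nat).
Implicit Types (x v : 'rV[R]_p).

Lemma compact_gt0_lbound (T : topologicalType) (A : set T) (g : T -> R) :
  compact A -> continuous g -> (forall t, A t -> 0 < g t) ->
  exists2 c, 0 < c & forall t, A t -> c <= g t.
Proof.
move=> cA g_cont g_gt0; have [[t0 At0]|A0] := pselect (A !=set0).
  have [t /[!inE] At t_min] := compact_EVT_min (ex_intro _ _ At0) cA
    (continuous_subspaceT g_cont).
  by exists (g t); [exact: g_gt0|move=> u Au; apply: t_min; rewrite inE].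
by exists 1 => // t At; case: A0; exists t.
Qed.

Lemma compact_zero_set (T : topologicalType) (g : T -> R) :
  compact [set: T] -> continuous g -> compact [set t | g t = 0].
Proof.
move=> cT g_cont; apply: (subclosed_compact _ cT) => //.
exact: preimage_closed (fun t _ => g_cont t) (@closed_eq _ 0).
Qed.

Lemma continuous_dotvl (T : topologicalType) (d : T -> 'rV[R]_p) v :
  continuous d -> continuous (fun t => dotv (d t) v).
Proof.
move=> d_cont; apply: continuous_big; first exact: add_continuous.
move=> i _ t; apply: cvgM; last exact: cvg_cst.
exact: continuous_comp (d_cont t) (@coord_continuous _ _ _ ord0 i (d t)).
Qed.

Lemma near0_right_shift_in x v (O : set 'rV[R]_p) :
  open O -> O x -> \forall s \near 0^'+, O (x + s *: v).
Proof.
move=> O_open Ox.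
suff shift_cvg : (fun s : R => x + s *: v) @ 0^'+ --> x + 0 *: v.
  by apply: shift_cvg; rewrite scale0r addr0; exact: open_nbhs_nbhs.
apply: cvg_at_right_filter; apply: cvgD; first exact: cvg_cst.
by apply: cvgZr_tmp; exact: cvg_id.
Qed.

Lemma near0_right_ascent (f : 'rV[R]_p -> R) x d v :
  gateaux_diff f x d -> 0 < dotv d v -> \forall s \near 0^'+, f x < f (x + s *: v).
Proof.
move=> f_diff dv_gt0; near=> s.
have s_gt0 : 0 < s by near: s; exact: nbhs_right_gt.
have : 0 < (f (x + s *: v) - f x) / s.
  by near: s; exact: cvgr_gt _ (f_diff v) _ dv_gt0.
by rewrite pmulr_lgt0 ?invr_gt0 // subr_gt0.
Unshelve. all: by end_near.
Qed.

Lemma near0_right_feasible (T : topologicalType) (h : 'rV[R]_p -> T -> R) x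
    (dh : T -> 'rV[R]_p) v :
  compact [set: T] -> (forall t, 0 <= h x t) ->
  equi_gateaux (fun t y => h y t) x dh ->
  equi_lsc [set t | h x t != 0] (fun t y => h y t) x ->
  continuous (h x) -> continuous dh ->
  (forall t, h x t = 0 -> 0 < dotv (dh t) v) ->
  \forall s \near 0^'+, forall t, 0 <= h (x + s *: v) t.
Proof.
move=> cT hx_ge0 [_ h_equi] h_lsc hx_cont dh_cont active_gt0.
pose g t := dotv (dh t) v.
have g_cont : continuous g := continuous_dotvl dh_cont.
have [gam gam_gt0 gam_le] :=
  compact_gt0_lbound (compact_zero_set cT hx_cont) g_cont active_gt0.
(* On W the uniform first-order expansion of h keeps it nonnegative; the
   compact complement of W avoids the active set, so h x >= bet > 0 there and
   equi-lower semicontinuity applies. *)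
pose W := [set t | gam / 2 < g t].
have W_open : open W.
  exact: open_comp (fun t _ => g_cont t) (@open_gt R (gam / 2)).
have [bet bet_gt0 bet_le] : exists2 bet, 0 < bet & forall t, ~ W t -> bet <= h x t.
  apply: compact_gt0_lbound => //.
    by apply: (subclosed_compact _ cT) => //; rewrite closedC.
  move=> t notWt; rewrite lt_def hx_ge0 andbT.
  apply: contra_notN notWt => /eqP hxt0.
  apply: lt_le_trans (gam_le t hxt0).
  by rewrite gtr_pMr ?invf_lt1 ?ltr1n.
have [del del_gt0 del_bound] := h_equi v (gam / 4) (divr_gt0 gam_gt0 (ltr0n _ 4)).
have [U [U_open Ux U_lsc]] := h_lsc bet bet_gt0.
near=> s => t.
have s_gt0 : 0 < s by near: s; exact: nbhs_right_gt.
have [Wt|notWt] := pselect (W t).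
  have s_lt_del : s < del by near: s; exact: nbhs_right_lt.
  have := del_bound s _ t; rewrite s_gt0 s_lt_del => /(_ isT).
  rewrite ler_norml ler_pdivlMr // => /andP[lower _].
  have : 0 < s * (dotv (dh t) v - gam / 2) by rewrite mulr_gt0 // subr_gt0.
  have := hx_ge0 t; nra.
have hxt_neq0 : h x t != 0.
  by rewrite gt_eqF // (lt_le_trans bet_gt0 (bet_le t notWt)).
have Uxsv : U (x + s *: v) by near: s; exact: near0_right_shift_in.
by have := U_lsc _ Uxsv t hxt_neq0; have := bet_le t notWt; lra.
Unshelve. all: by end_near.
Qed.

Lemma optimal_feasible_dir_le0 (T : topologicalType) (Omega : set 'rV[R]_p)
    (h : 'rV[R]_p -> T -> R) (f : 'rV[R]_p -> R) xh df (dh : T -> 'rV[R]_p) v :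
  compact [set: T] -> open Omega -> Omega xh -> (forall t, 0 <= h xh t) ->
  (forall x, Omega x -> (forall t, 0 <= h x t) -> f x <= f xh) ->
  gateaux_diff f xh df -> equi_gateaux (fun t x => h x t) xh dh ->
  equi_lsc [set t | h xh t != 0] (fun t x => h x t) xh ->
  continuous (h xh) -> continuous dh ->
  (forall t, h xh t = 0 -> 0 < dotv (dh t) v) -> dotv df v <= 0.
Proof.
move=> cT Omega_open Omega_xh hxh_ge0 xh_opt f_diff h_equi h_lsc hxh_cont dh_cont
  active_gt0.
rewrite leNgt; apply/negP => dfv_gt0.
have : \forall s \near 0^'+, [/\ Omega (xh + s *: v),
    forall t, 0 <= h (xh + s *: v) t & f xh < f (xh + s *: v)].
  near=> s; split; near: s.
  - exact: near0_right_shift_in.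
  - exact: near0_right_feasible cT hxh_ge0 h_equi h_lsc hxh_cont dh_cont active_gt0.
  - exact: near0_right_ascent.
case/filter_ex => s [xs_Omega xs_feasible xs_ascent].
by have := xh_opt _ xs_Omega xs_feasible; rewrite leNgt xs_ascent.
Unshelve. all: by end_near.
Qed.

End FirstOrderOptimality.

Theorem corollary4p5 (R : realType) (p : nat) (T : topologicalType)
  (Omega : set 'rV[R]_p) (h : 'rV[R]_p -> T -> R) (f : 'rV[R]_p -> R)
  (xh : 'rV[R]_p) (df : 'rV[R]_p) (dh : T -> 'rV[R]_p) :
  hausdorff_space T -> compact [set: T] -> [set: T] !=set0 ->
  open Omega -> Omega !=set0 ->
  (* xh is an optimal solution of max f(x) s.t. x in Omega, h(x,t) >= 0 for all t *)
  Omega xh -> (forall t, 0 <= h xh t) ->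
  (forall x, Omega x -> (forall t, 0 <= h x t) -> f x <= f xh) ->
  (* (a) *)
  [set t | h xh t = 0] !=set0 ->
  (* (b) *)
  gateaux_diff f xh df ->
  equi_gateaux (fun t x => h x t) xh dh ->
  (* (c) *)
  equi_lsc [set t | h xh t != 0] (fun t x => h x t) xh ->
  (* (d) *)
  continuous (h xh) -> continuous dh ->
  exists k : nat, exists lam : 'I_k.+1 -> R, exists ts : 'I_k.+1 -> T,
    [/\ (k <= p)%N, (forall i, 0 <= lam i) /\ (forall i, h xh (ts i) = 0),
        \sum_(i < k.+1) lam i = 1,
        lam ord0 *: df + \sum_(i < k) lam (lift ord0 i) *: dh (ts (lift ord0 i)) = 0
      & ~ in_conv [set dh t | t in [set t | h xh t = 0]] 0 -> lam ord0 != 0].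
Proof.
move=> _ cT _ Omega_open _ Omega_xh hxh_ge0 xh_opt [t0 ht0] f_diff h_equi h_lsc
  hxh_cont dh_cont.
pose Z := [set t | h xh t = 0].
have cK : compact (dh @` Z).
  apply: continuous_compact (continuous_subspaceT dh_cont) _.
  exact: compact_zero_set cT hxh_cont.
have [|[v [dfv_gt0 dhv_gt0]]] :=
  anchored_hull0_or_separated df cK (ex_intro _ _ (imageP dh ht0)); last first.
  have := optimal_feasible_dir_le0 cT Omega_open Omega_xh hxh_ge0 xh_opt f_diff
    h_equi h_lsc hxh_cont dh_cont (fun t Zt => dhv_gt0 _ (imageP dh Zt)).
  by rewrite leNgt dfv_gt0.
move=> /(anchored_hull0_image (ex_intro _ _ ht0)).
move=> [lam [ts [lam_ge0 tsZ lam_sum1 comb0]]].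
exists p, lam, ts; split => // not_conv; apply: contra_notN not_conv => /eqP lam0_eq0.
exists p, (lam \o lift ord0), (fun i => dh (ts (lift ord0 i))); split => //.
- by move=> i; exact: lam_ge0.
- by move: lam_sum1; rewrite big_ord_recl lam0_eq0 add0r.
- by move=> i; exists (ts (lift ord0 i)).
- by move: comb0; rewrite lam0_eq0 scale0r add0r => ->.
Qed.
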